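(* Let $\mathcal A\subseteq E^\infty$, let $V,W\subseteq E$ be block subspaces with $W\subseteq^*V$, let $\vec v$ be a finite block sequence and let $T$ be a $(V,\vec v)$-rule. If player I has a strategy in $B^T_V(\vec v)$ to play in $\mathcal A$, then player I has a strategy in $B^T_W(\vec v)$ to play in $\mathcal A$.
   Context: Fix a countable field $\mathfrak F$ and let $E$ be the countable-dimensional $\mathfrak F$-vector space with basis $(e_n)$. For non-zero $x=\sum a_ne_n$, ${\rm supp}\,x=\{n:a_n\neq0\}$. A block sequence is a sequence of non-zero vectors with $\max{\rm supp}\,x_n<\min{\rm supp}\,x_{n+1}$. ''Subspace'' means an infinite-dimensional block subspace of $E$. For a subspace $X$, $X[k]=\{x\in X\setminus\{0\}:k<\min{\rm supp}\,x\}$; $W\subseteq^*V$ means $W[n]\subseteq V$ for some $n$. $E^\infty=E^{\mathbb N}$ with the product of discrete topologies; $E^{<\infty}$ is the set of finite block sequences; $\hat{}$ is concatenation; $T_{\vec x}=\{\vec y:\vec x\,\hat{}\,\vec y\in T\}$. Game $B_V(\vec v)$: if $|\vec v|$ is even: II plays a subspace $Z_0\subseteq V$; I plays non-zero $x_0\in Z_0$ and $n_0\in\mathbb N$; II plays non-zero $y_0\in V[n_0]$ and a subspace $Z_1\subseteq V$; I plays $x_1\in Z_1$, $n_1$; II plays $y_1\in V[n_1]$, $Z_2$; etc.; outcome $\vec v\,\hat{}\,(x_0,y_0,x_1,y_1,\dots)$. If $|\vec v|$ is odd: I plays $n_0$; II plays $y_0\in V[n_0]$ and $Z_0\subseteq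 V$; I plays $x_0\in Z_0$ and $n_1$; II plays $y_1\in V[n_1]$ and $Z_1$; etc.; outcome $\vec v\,\hat{}\,(y_0,x_0,y_1,x_1,\dots)$. A $(V,\vec v)$-rule is a set $T\subseteq E^{<\infty}$ with $\vec v\in T$ such that: (i) if $\vec y\in T$, $|\vec y|$ odd, then for every subspace $Z\subseteq V$ there is $z\in Z$ with $\vec y\,\hat{}\,z\in T$; (ii) if $\vec y\in T$, $|\vec y|$ even, then there is $n$ with $\vec y\,\hat{}\,z\in T$ for all $z\in V[n]$. The $T$-induced subgame $B^T_V(\vec v)$ is played as $B_V(\vec v)$ with the additional requirement that every position, i.e. the finite sequence of vectors played so far listed in the order they appear in the outcome, belongs to $T_{\vec v}$ (a player violating this loses). A strategy to play in $\mathcal A$ is one all of whose outcomes lie in $\mathcal A$. *)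

From HB Require Import structures.
From mathcomp Require Import all_boot all_order all_algebra.
Set Implicit Arguments. Unset Strict Implicit. Unset Printing Implicit Defensive.
Import GRing.Theory.
Local Open Scope ring_scope.

Record vec (F : countFieldType) := Vec {
  coef : nat -> F;
  coef_fin : exists N : nat, forall n : nat, (N <= n)%N -> coef n = 0 }.

Lemma vec0_fin (F : countFieldType) :
  exists N : nat, forall n : nat, (N <= n)%N -> (fun _ : nat => (0 : F)) n = 0.
Proof. by exists 0%N. Qed.

Definition vec0 (F : countFieldType) : vec F := Vec (vec0_fin F).

Definition nonzero F (x : vec F) : Prop := exists i : nat, coef x i != 0.

Definition before F (x y : vec F) : Prop :=
  forall i j : nat, coef x i != 0 -> coef y j != 0 -> (i < j)%N.

Definition block_seq F (z : nat -> vec F) : Prop :=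
  forall k : nat, nonzero (z k) /\ before (z k) (z k.+1).

Definition fin_block_seq F (s : seq (vec F)) : Prop :=
  forall i : nat, (i < size s)%N ->
    nonzero (nth (vec0 F) s i) /\
    ((i.+1 < size s)%N -> before (nth (vec0 F) s i) (nth (vec0 F) s i.+1)).

Definition in_span F (z : nat -> vec F) (x : vec F) : Prop :=
  exists (n : nat) (c : nat -> F),
    forall i : nat, coef x i = \sum_(k < n) c k * coef (z k) i.

Definition is_block_subspace F (X : vec F -> Prop) : Prop :=
  exists z : nat -> vec F, block_seq z /\ forall x, X x <-> in_span z x.

Definition subset F (X Y : vec F -> Prop) : Prop := forall x, X x -> Y x.

Definition tail F (X : vec F -> Prop) (k : nat) (x : vec F) : Prop :=
  X x /\ nonzero x /\ forall i : nat, coef x i != 0 -> (k < i)%N.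

Definition almost_sub F (W V : vec F -> Prop) : Prop :=
  exists n : nat, subset (tail W n) V.

Definition is_rule F (V : vec F -> Prop) (v : seq (vec F))
    (T : seq (vec F) -> Prop) : Prop :=
  (forall s, T s -> fin_block_seq s) /\ T v /\
  (forall y, T y -> odd (size y) ->
     forall Z, is_block_subspace Z -> subset Z V ->
       exists z, Z z /\ T (rcons y z)) /\
  (forall y, T y -> ~~ odd (size y) ->
     exists n : nat, forall z, tail V n z -> T (rcons y z)).

Definition cat_inf F (v : seq (vec F)) (out : nat -> vec F) : nat -> vec F :=
  fun i => if (i < size v)%N then nth (vec0 F) v i else out (i - size v)%N.

Definition Z_ok F (V : vec F -> Prop) (Z : vec F -> Prop) : Prop :=
  is_block_subspace Z /\ subset Z V.

(* ---------- Game B_V(v), |v| even ----------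
   II plays Z_k; I plays (x_k, n_k); II plays y_k (together with Z_{k+1}).
   A strategy of I maps the history [(Z_0,y_0);...;(Z_{k-1},y_{k-1})] and
   the current Z_k to I's move (x_k, n_k). *)
Definition ev_strategy F :=
  seq ((vec F -> Prop) * vec F) -> (vec F -> Prop) -> vec F * nat.

Definition ev_Imove F (s : ev_strategy F) (Zs : nat -> vec F -> Prop)
    (ys : nat -> vec F) (k : nat) : vec F * nat :=
  s (mkseq (fun j => (Zs j, ys j)) k) (Zs k).

Definition ev_out F (s : ev_strategy F) Zs ys : nat -> vec F :=
  fun i => if odd i then ys i./2 else (ev_Imove s Zs ys i./2).1.

Definition ev_I_ok F (T : seq (vec F) -> Prop) (v : seq (vec F))
    (s : ev_strategy F) Zs ys (k : nat) : Prop :=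
  let x := (ev_Imove s Zs ys k).1 in
  Zs k x /\ nonzero x /\ T (v ++ mkseq (ev_out s Zs ys) (k.*2.+1)).

Definition ev_IIy_ok F (V : vec F -> Prop) (T : seq (vec F) -> Prop)
    (v : seq (vec F)) (s : ev_strategy F) Zs ys (k : nat) : Prop :=
  tail V (ev_Imove s Zs ys k).2 (ys k) /\
  T (v ++ mkseq (ev_out s Zs ys) (k.*2.+2)).

Definition ev_wins F (V : vec F -> Prop) (T : seq (vec F) -> Prop)
    (v : seq (vec F)) (A : (nat -> vec F) -> Prop) (s : ev_strategy F) : Prop :=
  forall (Zs : nat -> vec F -> Prop) (ys : nat -> vec F),
    (forall k : nat,
       (forall j : nat, (j < k)%N -> Z_ok V (Zs j) /\ ev_IIy_ok V T v s Zs ys j) ->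
       Z_ok V (Zs k) -> ev_I_ok T v s Zs ys k) /\
    ((forall k : nat, Z_ok V (Zs k) /\ ev_IIy_ok V T v s Zs ys k) ->
       A (cat_inf v (ev_out s Zs ys))).

(* ---------- Game B_V(v), |v| odd ----------
   I plays n_0; II plays (y_k, Z_k); I plays (x_k, n_{k+1}).
   A strategy of I is n_0 together with a map from the history
   [(y_0,Z_0);...;(y_{k-1},Z_{k-1})] and the current (y_k,Z_k) to (x_k,n_{k+1}). *)
Definition od_strategy F :=
  (nat * (seq (vec F * (vec F -> Prop)) -> vec F * (vec F -> Prop) -> vec F * nat))%type.

Definition od_Imove F (s : od_strategy F) (ys : nat -> vec F)
    (Zs : nat -> vec F -> Prop) (k : nat) : vec F * nat :=
  s.2 (mkseq (fun j => (ys j, Zs j)) k) (ys k, Zs k).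

Definition od_n F (s : od_strategy F) ys Zs (k : nat) : nat :=
  if k is k'.+1 then (od_Imove s ys Zs k').2 else s.1.

Definition od_out F (s : od_strategy F) ys Zs : nat -> vec F :=
  fun i => if odd i then (od_Imove s ys Zs i./2).1 else ys i./2.

Definition od_II_ok F (V : vec F -> Prop) (T : seq (vec F) -> Prop)
    (v : seq (vec F)) (s : od_strategy F) ys Zs (k : nat) : Prop :=
  tail V (od_n s ys Zs k) (ys k) /\
  T (v ++ mkseq (od_out s ys Zs) (k.*2.+1)) /\ Z_ok V (Zs k).

Definition od_I_ok F (T : seq (vec F) -> Prop) (v : seq (vec F))
    (s : od_strategy F) ys Zs (k : nat) : Prop :=
  let x := (od_Imove s ys Zs k).1 in
  Zs k x /\ nonzero x /\ T (v ++ mkseq (od_out s ys Zs) (k.*2.+2)).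

Definition od_wins F (V : vec F -> Prop) (T : seq (vec F) -> Prop)
    (v : seq (vec F)) (A : (nat -> vec F) -> Prop) (s : od_strategy F) : Prop :=
  forall (ys : nat -> vec F) (Zs : nat -> vec F -> Prop),
    (forall k : nat, (forall j : nat, (j <= k)%N -> od_II_ok V T v s ys Zs j) ->
       od_I_ok T v s ys Zs k) /\
    ((forall k : nat, od_II_ok V T v s ys Zs k) ->
       A (cat_inf v (od_out s ys Zs))).

Definition I_has_strategy F (V : vec F -> Prop) (T : seq (vec F) -> Prop)
    (v : seq (vec F)) (A : (nat -> vec F) -> Prop) : Prop :=
  if odd (size v) then exists s : od_strategy F, od_wins V T v A s
  else exists s : ev_strategy F, ev_wins V T v A s.

From Pilot Require Import Defs.
From mathcomp Require Import all_boot all_order all_algebra.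
From mathcomp Require Import zify.
From Stdlib Require Import ClassicalEpsilon Classical FunctionalExtensionality.
Import GRing.Theory.
Local Open Scope ring_scope.

(* Fix n0 with W[n0] ⊆ V.  Player I in B^T_W(v) simulates his
   winning strategy s for B^T_V(v) by translating the moves of II:
   - a subspace Z ⊆ W played by II is replaced by its "shrink" Z', the span of
     the tail of a block basis of Z lying strictly after n0; Z' is a block
     subspace with Z' ⊆ Z and Z' ⊆ W[n0] ∪ {0} ⊆ V, so it is a legal move in
     the V-game, and any x that s plays in Z' is a legal answer in Z;
   - every integer n answered by s is raised to max n n0, so that a vector y
     that II plays in W[max n n0] lies in V[n].
   Vectors are passed through unchanged, hence both plays have the same
   outcome: the T-constraints and the membership in A transfer verbatim. *)

Lemma block_seq_supp_ge {F : countFieldType} {z : nat -> vec F} :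
  block_seq z -> forall k i, coef (z k) i != 0 -> (k <= i)%N.
Proof.
move=> Hz; elim=> [//|k IH] i Hi.
have [[j Hj] Hbefore] := Hz k.
have := Hbefore _ _ Hj Hi; have := IH _ Hj; lia.
Qed.

Lemma block_seq_shift {F : countFieldType} (z : nat -> vec F) m :
  block_seq z -> block_seq (fun k => z (k + m)%N).
Proof. by move=> Hz k; rewrite addSn; exact: Hz. Qed.

Lemma in_span_shift {F : countFieldType} (z : nat -> vec F) m x :
  in_span (fun k => z (k + m)%N) x -> in_span z x.
Proof.
move=> [n [c Hc]].
exists (m + n)%N, (fun k => if (m <= k)%N then c (k - m)%N else 0) => i.
rewrite Hc big_split_ord /= [X in _ = X + _]big1 ?add0r; last first.
  by move=> k _; rewrite leqNgt ltn_ord mul0r.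
by apply: eq_bigr => k _; rewrite leq_addr addKn addnC.
Qed.

Lemma in_span_shift_supp {F : countFieldType} (z : nat -> vec F) m x i :
  block_seq z -> in_span (fun k => z (k + m)%N) x -> coef x i != 0 -> (m <= i)%N.
Proof.
move=> Hz [n [c ->]]; apply: contraNT; rewrite -ltnNge => Hi.
apply/eqP; apply: big1 => k _.
have -> : coef (z (k + m)%N) i = 0 by apply/eqP; apply: contraTT Hi =>
  /(block_seq_supp_ge Hz); rewrite -leqNgt; lia.
by rewrite mulr0.
Qed.

Lemma zero_in_span {F : countFieldType} (z : nat -> vec F) x :
  ~ nonzero x -> in_span z x.
Proof.
move=> Hx; exists 0%N, (fun _ => 0) => i; rewrite big_ord0.
by case: (coef x i =P 0) => // /eqP Hi; case: Hx; exists i.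
Qed.

(* shrink m Z: the span of a chosen block basis of Z with its first m vectors
   removed (Z itself if Z is not a block subspace). *)
Definition shrink {F : countFieldType} (m : nat) (Z : vec F -> Prop) : vec F -> Prop :=
  match excluded_middle_informative (is_block_subspace Z) with
  | left HZ => in_span (fun k => sval (constructive_indefinite_description _ HZ) (k + m)%N)
  | right _ => Z
  end.

Lemma shrinkE {F : countFieldType} (m : nat) {Z : vec F -> Prop} :
  is_block_subspace Z -> exists z, [/\ block_seq z, forall x, Z x <-> in_span z x &
    shrink m Z = in_span (fun k => z (k + m)%N)].
Proof.
rewrite /shrink; case: excluded_middle_informative => // HZ _.
by case: constructive_indefinite_description => z [Hz HZz]; exists z.
Qed.

Lemma shrink_block_subspace {F : countFieldType} m {Z : vec F -> Prop} :
  is_block_subspace Z -> is_block_subspace (shrink m Z).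
Proof.
move=> /(shrinkE m) [z [Hz _ ->]].
by exists (fun k => z (k + m)%N); split; [exact: block_seq_shift|].
Qed.

Lemma shrink_sub {F : countFieldType} {m} {Z : vec F -> Prop} :
  is_block_subspace Z -> Defs.subset (shrink m Z) Z.
Proof. by move=> /(shrinkE m) [z [_ HZz ->]] x /in_span_shift /HZz. Qed.

Lemma shrink_tail {F : countFieldType} {m} {Z : vec F -> Prop} {x} :
  is_block_subspace Z -> shrink m.+1 Z x -> nonzero x -> Defs.tail Z m x.
Proof.
move=> HZ Hx Hnz; split; first exact: shrink_sub Hx.
split=> // i; have [z [Hz _ Eshrink]] := shrinkE m.+1 HZ.
by rewrite Eshrink in Hx; exact: in_span_shift_supp Hz Hx.
Qed.

Section Transfer.

Context {F : countFieldType}.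
Variables (V W : vec F -> Prop) (n0 : nat).
Hypothesis HV : is_block_subspace V.
Hypothesis HWV : Defs.subset (Defs.tail W n0) V.

Lemma tail_maxn {a y} : Defs.tail W (maxn a n0) y -> Defs.tail V a y.
Proof.
move=> [Wy [Hnz Hsupp]].
have Hgt i : coef y i != 0 -> (a < i)%N /\ (n0 < i)%N.
  by move=> /Hsupp; rewrite gtn_max => /andP.
split; last by split=> // i /Hgt[].
by apply: HWV; split=> //; split=> // i /Hgt[].
Qed.

Lemma shrink_Z_ok {Z} : Z_ok W Z -> Z_ok V (shrink n0.+1 Z).
Proof.
move=> [HZ HZW]; split; first exact: shrink_block_subspace.
have [zV [_ HVz]] := HV.
move=> x Hx; case: (classic (nonzero x)) => Hnz; last by apply/HVz; exact: zero_in_span.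
have [Zx [_ Hsupp]] := shrink_tail HZ Hx Hnz.
by apply: HWV; split; [exact: HZW | split].
Qed.

Lemma shrink_Z_sub {Z x} : Z_ok W Z -> shrink n0.+1 Z x -> Z x.
Proof. by move=> [HZ _]; exact: shrink_sub. Qed.

Definition ev_transfer (s : ev_strategy F) : ev_strategy F :=
  fun hist Z =>
    let p := s (map (fun q => (shrink n0.+1 q.1, q.2)) hist) (shrink n0.+1 Z) in
    (p.1, maxn p.2 n0).

Lemma ev_transfer_move s Zs ys k :
  ev_Imove (ev_transfer s) Zs ys k =
  let p := ev_Imove s (fun j => shrink n0.+1 (Zs j)) ys k in (p.1, maxn p.2 n0).
Proof. by rewrite /ev_Imove /ev_transfer /mkseq -map_comp. Qed.

Lemma ev_transfer_out s Zs ys :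
  ev_out (ev_transfer s) Zs ys = ev_out s (fun j => shrink n0.+1 (Zs j)) ys.
Proof. by apply: functional_extensionality => i; rewrite /ev_out ev_transfer_move. Qed.

Lemma ev_transfer_wins T v A s : ev_wins V T v A s -> ev_wins W T v A (ev_transfer s).
Proof.
move=> Hs Zs ys; pose Zs' j := shrink n0.+1 (Zs j).
have IIlegal j : Z_ok W (Zs j) /\ ev_IIy_ok W T v (ev_transfer s) Zs ys j ->
    Z_ok V (Zs' j) /\ ev_IIy_ok V T v s Zs' ys j.
  move=> [HZ [Hy HT]]; split; first exact: shrink_Z_ok.
  rewrite ev_transfer_move in Hy; rewrite ev_transfer_out in HT.
  by split; [exact: tail_maxn|].
have [Ilegal Iwins] := Hs Zs' ys; split.
- move=> k Hpast HZ; have := Ilegal k (fun j hj => IIlegal j (Hpast j hj)) (shrink_Z_ok HZ).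
  rewrite /ev_I_ok ev_transfer_move ev_transfer_out /= => -[Hx Hrest].
  by split=> //; exact: shrink_Z_sub Hx.
- by move=> Hall; rewrite ev_transfer_out; apply: Iwins => k; exact: IIlegal.
Qed.

Definition od_transfer (s : od_strategy F) : od_strategy F :=
  (maxn s.1 n0, fun hist yZ =>
    let p := s.2 (map (fun q => (q.1, shrink n0.+1 q.2)) hist) (yZ.1, shrink n0.+1 yZ.2) in
    (p.1, maxn p.2 n0)).

Lemma od_transfer_move s ys Zs k :
  od_Imove (od_transfer s) ys Zs k =
  let p := od_Imove s ys (fun j => shrink n0.+1 (Zs j)) k in (p.1, maxn p.2 n0).
Proof. by rewrite /od_Imove /od_transfer /= /mkseq -map_comp. Qed.

Lemma od_transfer_n s ys Zs k :
  od_n (od_transfer s) ys Zs k = maxn (od_n s ys (fun j => shrink n0.+1 (Zs j)) k) n0.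
Proof. by case: k => [|k] //; rewrite /od_n od_transfer_move. Qed.

Lemma od_transfer_out s ys Zs :
  od_out (od_transfer s) ys Zs = od_out s ys (fun j => shrink n0.+1 (Zs j)).
Proof. by apply: functional_extensionality => i; rewrite /od_out od_transfer_move. Qed.

Lemma od_transfer_wins T v A s : od_wins V T v A s -> od_wins W T v A (od_transfer s).
Proof.
move=> Hs ys Zs; pose Zs' j := shrink n0.+1 (Zs j).
have IIlegal j : od_II_ok W T v (od_transfer s) ys Zs j -> od_II_ok V T v s ys Zs' j.
  move=> [Hy [HT HZ]]; rewrite od_transfer_n in Hy; rewrite od_transfer_out in HT.
  by split; [exact: tail_maxn | split; [|exact: shrink_Z_ok]].
have [Ilegal Iwins] := Hs ys Zs'; split.
- move=> k Hpast; have := Ilegal k (fun j hj => IIlegal j (Hpast j hj)).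
  rewrite /od_I_ok od_transfer_move od_transfer_out /= => -[Hx Hrest].
  have [_ [_ HZ]] := Hpast k (leqnn k).
  by split=> //; exact: shrink_Z_sub Hx.
- by move=> Hall; rewrite od_transfer_out; apply: Iwins => k; exact: IIlegal.
Qed.

End Transfer.

Theorem mainTheorem4 (F : countFieldType) (A : (nat -> vec F) -> Prop)
    (V W : vec F -> Prop) (v : seq (vec F)) (T : seq (vec F) -> Prop) :
  is_block_subspace V -> is_block_subspace W -> almost_sub W V ->
  is_rule V v T ->
  I_has_strategy V T v A -> I_has_strategy W T v A.
Proof.
move=> HV _ [n0 HWV] _; rewrite /I_has_strategy; case: ifP => _ [s Hs].
- by exists (od_transfer n0 s); exact: od_transfer_wins HV HWV _ _ _ _ Hs.
- by exists (ev_transfer n0 s); exact: ev_transfer_wins HV HWV _ _ _ _ Hs.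
Qed.
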